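(* Let $(\Omega,\mathcal{F})$ be a measurable space, $\mathcal{P}$ a nonempty set of probability measures on it, $\hat{\mathbb{E}}[Z]=\sup_{P\in\mathcal{P}}E_P[Z]$, and let $X,Y$ be random variables with $\hat{\mathbb{E}}[X^2]+\hat{\mathbb{E}}[Y^2]<\infty$. Put $U=\frac{X+Y}{2}$ and $V=\frac{X-Y}{2}$. Then $$\overline{C}(X,Y)=\max_{\beta\in\mathbb{R}}\min_{\alpha\in\mathbb{R}}\hat{\mathbb{E}}[(U-\alpha)^2-(V-\beta)^2],\qquad \underline{C}(X,Y)=\min_{\alpha\in\mathbb{R}}\max_{\beta\in\mathbb{R}}\left(-\hat{\mathbb{E}}[-(U-\alpha)^2+(V-\beta)^2]\right).$$ In particular, $\overline{C}(X,X)=\overline{V}(X)$ and $\underline{C}(X,X)=\underline{V}(X)$.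
   Context: For a random variable $W$ with $\hat{\mathbb{E}}[W^2]<\infty$: $\overline{\mu}_W=\hat{\mathbb{E}}[W]$, $\underline{\mu}_W=-\hat{\mathbb{E}}[-W]$, $M_W=[\underline{\mu}_W,\overline{\mu}_W]$. Upper variance $\overline{V}(W)=\min_{\mu\in M_W}\hat{\mathbb{E}}[(W-\mu)^2]$, lower variance $\underline{V}(W)=\min_{\mu\in M_W}\left(-\hat{\mathbb{E}}[-(W-\mu)^2]\right)$. Upper covariance $\overline{C}(X,Y)=\max_{\mu_2\in M_Y}\min_{\mu_1\in M_X}\hat{\mathbb{E}}[(X-\mu_1)(Y-\mu_2)]$; lower covariance $\underline{C}(X,Y)=\min_{\mu_2\in M_Y}\max_{\mu_1\in M_X}\left(-\hat{\mathbb{E}}[-(X-\mu_1)(Y-\mu_2)]\right)$. *)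

From HB Require Import structures.
From mathcomp Require Import all_boot all_order all_algebra.
From mathcomp Require Import all_classical all_reals.
From mathcomp Require Import ereal topology normedtype sequences measure lebesgue_measure lebesgue_integral probability.
Set Implicit Arguments. Unset Strict Implicit. Unset Printing Implicit Defensive.
Import Order.TTheory GRing.Theory Num.Theory.
Local Open Scope classical_set_scope.
Local Open Scope ring_scope.
Local Open Scope ereal_scope.

Definition sublin_exp d (T : measurableType d) (R : realType)
  (Ps : set (probability T R)) (Z : T -> R) : \bar R :=
  ereal_sup [set (\int[P]_x (Z x)%:E) | P in Ps].

Definition meanset d (T : measurableType d) (R : realType)
  (Ps : set (probability T R)) (W : T -> R) : set R :=
  [set mu : R | - sublin_exp Ps (fun x => (- W x)%R) <= mu%:E
                /\ mu%:E <= sublin_exp Ps W].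

Definition is_max (R : realType) (S : set (\bar R)) (m : \bar R) :=
  S m /\ forall s, S s -> s <= m.
Definition is_min (R : realType) (S : set (\bar R)) (m : \bar R) :=
  S m /\ forall s, S s -> m <= s.

Definition is_maxmin (R : realType) (S1 S2 : Type) (B : set S1) (A : set S2)
  (F : S1 -> S2 -> \bar R) (c : \bar R) :=
  exists h : S1 -> \bar R,
    (forall b, B b -> is_min [set F b a | a in A] (h b)) /\
    is_max [set h b | b in B] c.

Definition is_minmax (R : realType) (S1 S2 : Type) (B : set S1) (A : set S2)
  (F : S1 -> S2 -> \bar R) (c : \bar R) :=
  exists h : S1 -> \bar R,
    (forall b, B b -> is_max [set F b a | a in A] (h b)) /\
    is_min [set h b | b in B] c.

From HB Require Import structures.
From mathcomp Require Import all_boot all_order all_algebra.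
From mathcomp Require Import all_classical all_reals.
From mathcomp Require Import ereal topology normedtype sequences measure.
From mathcomp Require Import lebesgue_measure lebesgue_integral probability.
From mathcomp Require Import derive exp measurable_realfun hoelder.
From mathcomp Require Import lra ring.
Import Order.TTheory GRing.Theory Num.Theory.
Import numFieldNormedType.Exports.
Set Implicit Arguments. Unset Strict Implicit. Unset Printing Implicit Defensive.
Local Open Scope classical_set_scope.
Local Open Scope ring_scope.

(* Every P in Ps contributes the moment triple (E_P X, E_P Y, E_P XY), and every
   sublinear expectation in the statement is the supremum over P of an affine
   function of that triple; square integrability makes the triples bounded.
   The lower quantities for (X, Y) are the upper ones for (X, -Y) with a sign
   change, and the variances are the cases Y = X and Y = -X, so everything
   reduces to showing that both upper max-min problems have the value S, the
   supremum of Cov_Q(X, Y) over the two-point mixtures Q = l P + (1 - l) P'.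
   The bound >= S: put the outer variable at the corresponding mean of Q, so
   that the bilinear correction term in E_Q[...] = Cov_Q + ... is harmless.
   The bound <= S is a one-dimensional Helly argument: for a fixed outer
   variable, each P allows an interval of inner variables keeping E_P[...]
   below S, and any two of these intervals meet because a suitable mixture of
   the two measures stays below S.  The extrema are attained by the extreme
   value theorem, all functions being Lipschitz on bounded intervals, to which
   the unbounded problems reduce by clamping. *)

Section real_facts.
Variable R : realType.
Implicit Types (k lo hi x y : R) (f : R -> R).

Lemma sup_image_ub (I : Type) (P : set I) (u : I -> R) M i :
  (forall j, P j -> u j <= M) -> P i -> u i <= sup (u @` P).
Proof.
move=> uM Pi; apply: sup_upper_bound; last by exists i.
by split; [exists (u i), i | exists M => _ [j Pj <-]; exact: uM].
Qed.

Lemma sup_image_le (I : Type) (P : set I) (u : I -> R) M :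
  P !=set0 -> (forall j, P j -> u j <= M) -> sup (u @` P) <= M.
Proof.
move=> [i Pi] uM; apply: ge_sup; first by exists (u i), i.
by move=> _ [j Pj <-]; exact: uM.
Qed.

Lemma exists_between (L U : set R) :
  L !=set0 -> U !=set0 -> (forall l u, L l -> U u -> l <= u) ->
  exists2 x, ubound L x & lbound U x.
Proof.
move=> [l0 Ll0] [u0 Uu0] LU.
have supL : has_sup L by split; [exists l0 | exists u0 => l Ll; exact: LU].
exists (sup L); first exact: sup_upper_bound.
by move=> u Uu; apply: ge_sup; [exists l0 | move=> l Ll; exact: LU].
Qed.

Definition clamp lo hi x := if x < lo then lo else if hi < x then hi else x.

Lemma clamp_in lo hi x : lo <= hi -> lo <= clamp lo hi x <= hi.
Proof.
rewrite /clamp => lohi; case: ltrP => [_|xlo]; first by rewrite lexx lohi.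
by case: ltrP => [_|xhi]; [rewrite lohi lexx | rewrite xlo xhi].
Qed.

Lemma clamp_id lo hi x : lo <= x <= hi -> clamp lo hi x = x.
Proof. by move=> /andP[xlo xhi]; rewrite /clamp ltNge xlo ltNge xhi. Qed.

Lemma ler_dist_clamp lo hi x y : lo <= hi ->
  `|clamp lo hi x - clamp lo hi y| <= `|x - y|.
Proof.
move=> lohi; have := ler_norm (x - y); have := ler_norm (y - x).
rewrite distrC ler_norml /clamp.
by case: ltrP => ?; case: ltrP => ?; case: ltrP => ?; try case: ltrP => ?; lra.
Qed.

Lemma clamp_sqr_le lo hi x m : lo <= m <= hi ->
  (clamp lo hi x - m) ^+ 2 <= (x - m) ^+ 2.
Proof.
move=> /andP[mlo mhi]; rewrite /clamp.
by case: ltrP => ?; [nra | case: ltrP => ?; [nra | exact: lexx]].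
Qed.

Definition mix (l x y : R) := l * x + (1 - l) * y.

Lemma mix_in l x y lo hi : 0 <= l <= 1 -> lo <= x <= hi -> lo <= y <= hi ->
  lo <= mix l x y <= hi.
Proof. by rewrite /mix => /andP[? ?] /andP[? ?] /andP[? ?]; apply/andP; split; nra. Qed.

Lemma lipschitz_continuous k f : k.-lipschitz f -> continuous f.
Proof.
move=> fk x; apply/cvgrPdist_le => eps eps0.
have k1 : 0 < `|k| + 1 by rewrite ltr_pwDr // normr_ge0.
exists (eps / (`|k| + 1)); first by rewrite /= divr_gt0.
move=> t /=; rewrite ltr_pdivlMr // => xt.
apply: le_trans (fk (x, t) (conj I I)) _ => /=.
have := ler_norm k; have := normr_ge0 (x - t); have := normr_ge0 k; nra.
Qed.

Lemma EVT_min_lipschitz k lo hi f : 0 <= k -> lo <= hi ->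
  k.-lipschitz_[set x | lo <= x <= hi] f ->
  exists2 c, lo <= c <= hi & forall t, lo <= t <= hi -> f c <= f t.
Proof.
move=> k0 lohi fk.
have fclamp : k.-lipschitz (f \o clamp lo hi).
  move=> [x y] _ /=; apply: le_trans (fk (clamp lo hi x, clamp lo hi y) _) _.
    by split; exact: clamp_in.
  by rewrite ler_wpM2l // ler_dist_clamp.
have [c] := EVT_min lohi (continuous_subspaceT (lipschitz_continuous fclamp)).
rewrite in_itv /= => cI cmin; exists c => // t tI.
by have := cmin t; rewrite in_itv /= !clamp_id //; exact.
Qed.

Lemma EVT_max_lipschitz k lo hi f : 0 <= k -> lo <= hi ->
  k.-lipschitz_[set x | lo <= x <= hi] f ->
  exists2 c, lo <= c <= hi & forall t, lo <= t <= hi -> f t <= f c.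
Proof.
move=> k0 lohi fk.
have fNk : k.-lipschitz_[set x | lo <= x <= hi] (fun x => - f x).
  by move=> p Ap; rewrite /= -opprD normrN; exact: fk.
have [c cI cmin] := EVT_min_lipschitz k0 lohi fNk.
by exists c => // t /cmin; rewrite lerN2.
Qed.

Lemma lipschitzT_sub k f (A : set R) : k.-lipschitz f -> k.-lipschitz_A f.
Proof. by move=> fk p _; apply: fk. Qed.

Lemma lipschitz_min_value (F : R -> R -> R) (B A : set R) (am : R -> R) k :
  (forall b, A (am b)) -> (forall b a, A a -> F b (am b) <= F b a) ->
  (forall a, A a -> k.-lipschitz_B (F^~ a)) -> k.-lipschitz_B (fun b => F b (am b)).
Proof.
move=> Aam amin FBk [b b'] [/= Bb Bb'].
have le_min u v : B u -> B v -> F u (am u) <= F v (am v) + k * `|u - v|.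
  move=> Bu Bv; apply: le_trans (amin u _ (Aam v)) _.
  by have := FBk _ (Aam v) (u, v) (conj Bu Bv); rewrite /= ler_norml; lra.
by rewrite ler_norml; have := le_min _ _ Bb Bb'; have := le_min _ _ Bb' Bb;
  rewrite distrC; lra.
Qed.

Definition maxmin_solution (B A : set R) (F : R -> R -> R) (am : R -> R) bm :=
  [/\ forall b, A (am b), forall b a, A a -> F b (am b) <= F b a,
      B bm & forall b, B b -> F b (am b) <= F bm (am bm)].

Lemma maxmin_solution_interval (F : R -> R -> R) (kA : R -> R) k loB hiB loA hiA :
  0 <= k -> (forall b, 0 <= kA b) -> loB <= hiB -> loA <= hiA ->
  (forall b, (kA b).-lipschitz_[set a | loA <= a <= hiA] (F b)) ->
  (forall a, loA <= a <= hiA -> k.-lipschitz_[set b | loB <= b <= hiB] (F^~ a)) ->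
  exists am bm, maxmin_solution [set b | loB <= b <= hiB] [set a | loA <= a <= hiA]
                  F am bm.
Proof.
move=> k0 kA0 leB leA FAk FBk.
have /choice[am amP] : forall b, exists a, loA <= a <= hiA /\
    forall t, loA <= t <= hiA -> F b a <= F b t.
  by move=> b; have [a ? ?] := EVT_min_lipschitz (kA0 b) leA (FAk b); exists a.
have Aam b : loA <= am b <= hiA by have [] := amP b.
have amin b a : loA <= a <= hiA -> F b (am b) <= F b a by have [_] := amP b; apply.
have [bm ? bmax] := EVT_max_lipschitz k0 leB (lipschitz_min_value Aam amin FBk).
by exists am, bm; split.
Qed.

Lemma maxmin_solution_setT (F : R -> R -> R) am bm lo hi : lo <= hi ->
  (forall b a, F b (clamp lo hi a) <= F b a) ->
  (forall b a, F b a <= F (clamp lo hi b) a) ->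
  maxmin_solution [set b | lo <= b <= hi] [set a | lo <= a <= hi] F am bm ->
  maxmin_solution setT setT F am bm.
Proof.
move=> lohi Fa Fb [Aam amin _ bmax]; split => // [b a _ | b _].
- exact: le_trans (amin _ _ (clamp_in _ lohi)) (Fa b a).
- apply: le_trans (bmax _ (clamp_in b lohi)).
  exact: le_trans (amin _ _ (Aam _)) (Fb _ _).
Qed.

Lemma maxmin_solution_oppB (B A : set R) F am bm :
  maxmin_solution B A F am bm ->
  maxmin_solution [set b | B (- b)] A (fun b => F (- b)) (fun b => am (- b)) (- bm).
Proof.
move=> [Aam amin Bbm bmax]; split => [b | b a | | b] /=.
- exact: Aam.
- exact: amin.
- by rewrite opprK.
- by rewrite opprK; exact: bmax.
Qed.

End real_facts.

(** * Two-point mixtures of a bounded family of moment triples *)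

Section two_point_mixtures.
Variables (R : realType) (I : Type) (P : set I) (a b e : I -> R) (K : R).
Hypotheses (P0 : P !=set0) (Ka : forall i, P i -> `|a i| <= K)
  (Kb : forall i, P i -> `|b i| <= K) (Ke : forall i, P i -> `|e i| <= K).

(* [i] ranges over the probability measures; [a i], [b i], [e i] stand for
   E_i[X], E_i[Y], E_i[XY], so [upper_moment c0 c1 c2 c3] is
   Ê[c0 + c1 X + c2 Y + c3 XY]. *)
Definition moment i c0 c1 c2 c3 := c0 + c1 * a i + c2 * b i + c3 * e i.
Definition upper_moment c0 c1 c2 c3 := sup [set moment i c0 c1 c2 c3 | i in P].

Lemma K_ge0 : 0 <= K.
Proof. by case: P0 => i Pi; exact: le_trans (normr_ge0 _) (Ka Pi). Qed.

Lemma moment_le i c0 c1 c2 c3 : P i ->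
  moment i c0 c1 c2 c3 <= `|c0| + (`|c1| + `|c2| + `|c3|) * K.
Proof.
move=> Pi; rewrite /moment.
have bound c x : `|x| <= K -> c * x <= `|c| * K.
  move=> xK; apply: le_trans (ler_norm _) _; rewrite normrM.
  by apply: ler_wpM2l => //; exact: normr_ge0.
have := bound c1 _ (Ka Pi); have := bound c2 _ (Kb Pi); have := bound c3 _ (Ke Pi).
have := ler_norm c0; lra.
Qed.

Lemma moment_le_upper i c0 c1 c2 c3 : P i ->
  moment i c0 c1 c2 c3 <= upper_moment c0 c1 c2 c3.
Proof. by move=> Pi; apply: sup_image_ub Pi => j Pj; exact: moment_le. Qed.

Lemma upper_moment_le c0 c1 c2 c3 M :
  (forall i, P i -> moment i c0 c1 c2 c3 <= M) -> upper_moment c0 c1 c2 c3 <= M.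
Proof. exact: sup_image_le. Qed.

Lemma le_upper_moment c0 c1 c2 c3 d0 d1 d2 d3 :
  (forall i, P i -> moment i c0 c1 c2 c3 <= moment i d0 d1 d2 d3) ->
  upper_moment c0 c1 c2 c3 <= upper_moment d0 d1 d2 d3.
Proof.
move=> cd; apply: upper_moment_le => i Pi.
exact: le_trans (cd i Pi) (moment_le_upper _ _ _ _ Pi).
Qed.

Lemma upper_moment_dist c0 c1 c2 c3 d0 d1 d2 d3 D :
  (forall i, P i -> `|moment i c0 c1 c2 c3 - moment i d0 d1 d2 d3| <= D) ->
  `|upper_moment c0 c1 c2 c3 - upper_moment d0 d1 d2 d3| <= D.
Proof.
move=> cdD.
have le_shift c0' c1' c2' c3' d0' d1' d2' d3' :
    (forall i, P i -> `|moment i c0' c1' c2' c3' - moment i d0' d1' d2' d3'| <= D) ->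
    upper_moment c0' c1' c2' c3' <= upper_moment d0' d1' d2' d3' + D.
  move=> H; apply: upper_moment_le => i Pi.
  have := moment_le_upper d0' d1' d2' d3' Pi; have := H i Pi; rewrite ler_norml; lra.
have := le_shift _ _ _ _ _ _ _ _ cdD.
have : upper_moment d0 d1 d2 d3 <= upper_moment c0 c1 c2 c3 + D.
  by apply: le_shift => i Pi; rewrite distrC; exact: cdD.
by rewrite ler_norml; lra.
Qed.

Definition a_hi := upper_moment 0 1 0 0.
Definition a_lo := - upper_moment 0 (-1) 0 0.
Definition b_hi := upper_moment 0 0 1 0.
Definition b_lo := - upper_moment 0 0 (-1) 0.

Lemma a_in i : P i -> a_lo <= a i <= a_hi.
Proof.
move=> Pi; have := moment_le_upper 0 1 0 0 Pi; have := moment_le_upper 0 (-1) 0 0 Pi.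
by rewrite /moment /a_lo /a_hi; lra.
Qed.

Lemma b_in i : P i -> b_lo <= b i <= b_hi.
Proof.
move=> Pi; have := moment_le_upper 0 0 1 0 Pi; have := moment_le_upper 0 0 (-1) 0 Pi.
by rewrite /moment /b_lo /b_hi; lra.
Qed.

Lemma a_lo_le_hi : a_lo <= a_hi.
Proof. by case: P0 => i /a_in /andP[]; exact: le_trans. Qed.

Lemma b_lo_le_hi : b_lo <= b_hi.
Proof. by case: P0 => i /b_in /andP[]; exact: le_trans. Qed.

Lemma norm_le_K_of_a_interval x : a_lo <= x <= a_hi -> `|x| <= K.
Proof.
have hi : a_hi <= K.
  by apply: upper_moment_le => i /Ka; rewrite /moment ler_norml; lra.
have lo : - K <= a_lo.
  rewrite /a_lo lerNl opprK; apply: upper_moment_le => i /Ka.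
  by rewrite /moment ler_norml; lra.
by rewrite ler_norml; lra.
Qed.

Definition cov i := e i - a i * b i.
(* [cross m1 m2] is Ê[(X - m1)(Y - m2)] and [sqdiff beta alpha] is
   Ê[(U - alpha)^2 - (V - beta)^2], since (U - alpha)^2 - (V - beta)^2 =
   (X - (alpha + beta)) (Y - (alpha - beta)). *)
Definition cross_at i m1 m2 := moment i (m1 * m2) (- m2) (- m1) 1.
Definition cross m1 m2 := upper_moment (m1 * m2) (- m2) (- m1) 1.
Definition sqdiff beta alpha := cross (alpha + beta) (alpha - beta).

Lemma cross_atE i m1 m2 : cross_at i m1 m2 = cov i + (m1 - a i) * (m2 - b i).
Proof. by rewrite /cross_at /moment /cov; ring. Qed.

Lemma cross_at_le i m1 m2 : P i -> cross_at i m1 m2 <= cross m1 m2.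
Proof. exact: moment_le_upper. Qed.

Lemma cross_lipschitz_l m2 k : `|m2| <= k -> (k + K).-lipschitz (cross^~ m2).
Proof.
move=> m2k [x y] _ /=; apply: upper_moment_dist => i Pi.
rewrite (_ : _ - _ = (x - y) * (m2 - b i)); last by rewrite /moment; ring.
rewrite normrM mulrC ler_wpM2r // (le_trans (ler_normB _ _)) // lerD //; exact: Kb.
Qed.

Lemma cross_lipschitz_r m1 k : `|m1| <= k -> (k + K).-lipschitz (cross m1).
Proof.
move=> m1k [x y] _ /=; apply: upper_moment_dist => i Pi.
rewrite (_ : _ - _ = (x - y) * (m1 - a i)); last by rewrite /moment; ring.
rewrite normrM mulrC ler_wpM2r // (le_trans (ler_normB _ _)) // lerD //; exact: Ka.
Qed.

Definition mix_cov i j l :=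
  mix l (e i) (e j) - mix l (a i) (a j) * mix l (b i) (b j).

(* The common value of all the max-min problems. *)
Definition mix_cov_sup := sup [set mix_cov t.1.1 t.1.2 t.2 |
  t in [set t : I * I * R | [/\ P t.1.1, P t.1.2 & 0 <= t.2 <= 1]]].

Local Notation S := mix_cov_sup.

Lemma mix_cov_le_sup i j l : P i -> P j -> 0 <= l <= 1 -> mix_cov i j l <= S.
Proof.
move=> Pi Pj l01; apply: (@sup_image_ub _ _ _ _ (K + K * K) (i, j, l)) => //.
move=> [[i' j'] l'] [/= Pi' Pj' /andP[l0 l1]].
have mixK (x y : R) : `|x| <= K -> `|y| <= K -> `|mix l' x y| <= K.
  by rewrite /mix !ler_norml => /andP[? ?] /andP[? ?]; apply/andP; split; nra.
have := mixK _ _ (Ke Pi') (Ke Pj'); have := mixK _ _ (Ka Pi') (Ka Pj').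
have := mixK _ _ (Kb Pi') (Kb Pj'); rewrite /mix_cov !ler_norml; nra.
Qed.

Lemma mix_cov_sup_le M :
  (forall i j l, P i -> P j -> 0 <= l <= 1 -> mix_cov i j l <= M) -> S <= M.
Proof.
move=> covM; apply: sup_image_le; last by move=> [[i j] l] [/= Pi Pj]; exact: covM.
by case: P0 => i Pi; exists (i, i, 1); split => //=; rewrite ler01 lexx.
Qed.

Lemma cov_le_sup i : P i -> cov i <= S.
Proof.
move=> Pi; have := mix_cov_le_sup Pi Pi (_ : 0 <= 1 <= 1).
by rewrite /mix_cov /mix /cov subrr !mul0r !addr0 !mul1r; apply; rewrite ler01 lexx.
Qed.

Lemma mix_cross_at i j l m1 m2 :
  mix l (cross_at i m1 m2) (cross_at j m1 m2) =
  mix_cov i j l + (m1 - mix l (a i) (a j)) * (m2 - mix l (b i) (b j)).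
Proof. by rewrite /cross_at /moment /mix_cov /mix; ring. Qed.

Lemma mix_cross_at_le_sup i j l m1 m2 : P i -> P j -> 0 <= l <= 1 ->
  (m1 - mix l (a i) (a j)) * (m2 - mix l (b i) (b j)) <= 0 ->
  mix l (cross_at i m1 m2) (cross_at j m1 m2) <= S.
Proof.
by move=> Pi Pj l01 le0; rewrite mix_cross_at; have := mix_cov_le_sup Pi Pj l01; lra.
Qed.

Lemma mix_cov_le_cross i j l m1 m2 : P i -> P j -> 0 <= l <= 1 ->
  mix_cov i j l + (m1 - mix l (a i) (a j)) * (m2 - mix l (b i) (b j)) <= cross m1 m2.
Proof.
move=> Pi Pj /andP[l0 l1]; rewrite -mix_cross_at /mix.
have := cross_at_le m1 m2 Pi; have := cross_at_le m1 m2 Pj; nra.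
Qed.

Section cross_below_sup.
Variable m2 : R.

Let slope i := m2 - b i.
(* The point where the affine map [x |-> cross_at i x m2] crosses the level S. *)
Let root i := a i + (S - cov i) / slope i.

Let cross_at_le_sup_pos i x : 0 < slope i -> (cross_at i x m2 <= S) = (x <= root i).
Proof.
move=> s0; rewrite cross_atE [in RHS]/root -[in RHS]lerBlDl [in RHS]ler_pdivlMr //.
by apply/idP/idP; rewrite /slope; lra.
Qed.

Let cross_at_le_sup_neg i x : slope i < 0 -> (cross_at i x m2 <= S) = (root i <= x).
Proof.
move=> s0; rewrite cross_atE [in RHS]/root -[in RHS]lerBrDl [in RHS]ler_ndivrMr //.
by apply/idP/idP; rewrite /slope; lra.
Qed.

Let root_le_root i j : P i -> P j -> 0 < slope i -> slope j < 0 -> root j <= root i.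
Proof.
move=> Pi Pj si sj; rewrite -cross_at_le_sup_neg //.
(* Under the mixture of weight [l] the mean of Y is [m2], so the mixed
   [cross_at] no longer depends on its first argument. *)
pose l := - slope j / (slope i - slope j).
have l1 : l < 1 by rewrite /l ltr_pdivrMr; lra.
have l01 : 0 <= l <= 1 by rewrite (ltW l1) andbT /l divr_ge0 //; lra.
have d0 : slope i - slope j != 0 by rewrite gt_eqF //; lra.
have bl : mix l (b i) (b j) = m2 by move: d0; rewrite /l /mix /slope => d0; field.
have := mix_cross_at_le_sup (m1 := root i) (m2 := m2) Pi Pj l01.
rewrite bl subrr mulr0 lexx => /(_ isT).
have -> : cross_at i (root i) m2 = S.
  by move: (gt_eqF si); rewrite cross_atE /root /slope => /negbT si0; field.
by rewrite /mix; nra.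
Qed.

Lemma exists_cross_le_sup : exists2 m1, a_lo <= m1 <= a_hi & cross m1 m2 <= S.
Proof.
pose L := [set y | y = a_lo \/ exists2 j, P j & slope j < 0 /\ y = root j].
pose U := [set y | y = a_hi \/ exists2 i, P i & 0 < slope i /\ y = root i].
have [x Lx Ux] : exists2 x, ubound L x & lbound U x.
  apply: exists_between; [by exists a_lo; left | by exists a_hi; left |].
  move=> _ _ [->|[j Pj [sj ->]]] [->|[i Pi [si ->]]].
  - exact: a_lo_le_hi.
  - rewrite -cross_at_le_sup_pos // cross_atE; have /andP[? _] := a_in Pi.
    by have := cov_le_sup Pi; rewrite /slope in si *; nra.
  - rewrite -cross_at_le_sup_neg // cross_atE; have /andP[_ ?] := a_in Pj.
    by have := cov_le_sup Pj; rewrite /slope in sj *; nra.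
  - exact: root_le_root.
exists x; first by rewrite Lx ?Ux //; [left | left].
apply: upper_moment_le => i Pi; rewrite -/(cross_at i x m2).
case: (ltgtP (slope i) 0) => si.
- by rewrite cross_at_le_sup_neg //; apply: Lx; right; exists i.
- by rewrite cross_at_le_sup_pos //; apply: Ux; right; exists i.
- by rewrite cross_atE -/(slope i) si mulr0 addr0; exact: cov_le_sup.
Qed.

End cross_below_sup.

Definition mean_U i := (a i + b i) / 2.
Definition mean_V i := (a i - b i) / 2.

Lemma cross_at_sqdiffE i beta alpha : cross_at i (alpha + beta) (alpha - beta) =
  cov i + (alpha - mean_U i) ^+ 2 - (beta - mean_V i) ^+ 2.
Proof. by rewrite cross_atE /mean_U /mean_V; field. Qed.

Section sqdiff_below_sup.
Variable beta : R.

(* The half-width of the interval of [alpha] around [mean_U i] on which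
   [cross_at i (alpha + beta) (alpha - beta) <= S]. *)
Let rad i := Num.sqrt (S - cov i + (beta - mean_V i) ^+ 2).

Let rad_ge0 i : 0 <= rad i := sqrtr_ge0 _.

Let rad_sqr i : P i -> rad i ^+ 2 = S - cov i + (beta - mean_V i) ^+ 2.
Proof.
move=> Pi; rewrite sqr_sqrtr //.
by have := cov_le_sup Pi; have := sqr_ge0 (beta - mean_V i); lra.
Qed.

Let cross_at_le_sup i alpha : P i -> mean_U i - rad i <= alpha <= mean_U i + rad i ->
  cross_at i (alpha + beta) (alpha - beta) <= S.
Proof.
move=> Pi /andP[lo hi]; rewrite cross_at_sqdiffE.
by have := rad_sqr Pi; have := rad_ge0 i; nra.
Qed.

Let sup_lt_cross_at i alpha : P i ->
  alpha < mean_U i - rad i \/ mean_U i + rad i < alpha ->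
  S < cross_at i (alpha + beta) (alpha - beta).
Proof.
move=> Pi out; rewrite cross_at_sqdiffE; have := rad_sqr Pi; have := rad_ge0 i.
by case: out => ?; nra.
Qed.

Let intervals_meet i j : P i -> P j -> mean_U i - rad i <= mean_U j + rad j.
Proof.
move=> Pi Pj; rewrite leNgt; apply/negP => gap.
have ri := rad_ge0 i; have rj := rad_ge0 j.
(* The mixture whose U-mean is the midpoint [a0] of the gap lies above S. *)
pose a0 := (mean_U i - rad i + (mean_U j + rad j)) / 2.
pose l := (a0 - mean_U j) / (mean_U i - mean_U j).
have d0 : 0 < mean_U i - mean_U j by lra.
have l01 : 0 <= l <= 1.
  by rewrite /l divr_ge0 ?ler_pdivrMr ?mul1r /a0 //=; lra.
have ml : mix l (mean_U i) (mean_U j) = a0.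
  by move: (gt_eqF d0); rewrite /l /mix => /negbT d0'; field.
have := mix_cross_at_le_sup (m1 := a0 + beta) (m2 := a0 - beta) Pi Pj l01.
have -> : (a0 + beta - mix l (a i) (a j)) * (a0 - beta - mix l (b i) (b j)) =
          - (beta - mix l (mean_V i) (mean_V j)) ^+ 2.
  by rewrite -ml /mix /mean_U /mean_V; field.
rewrite oppr_le0 sqr_ge0 => /(_ isT).
have l0 : 0 < l by rewrite /l divr_gt0 // /a0; lra.
have gi : S < cross_at i (a0 + beta) (a0 - beta).
  by apply: sup_lt_cross_at => //; left; rewrite /a0; lra.
have gj : S < cross_at j (a0 + beta) (a0 - beta).
  by apply: sup_lt_cross_at => //; right; rewrite /a0; lra.
by rewrite /mix; move: l01 => /andP[_ ?]; nra.
Qed.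

Lemma exists_sqdiff_le_sup : exists alpha, sqdiff beta alpha <= S.
Proof.
have [x lo hi] : exists2 x, ubound [set mean_U i - rad i | i in P] x &
                            lbound [set mean_U i + rad i | i in P] x.
  apply: exists_between; [by case: P0 => i Pi; exists (mean_U i - rad i), i
                         | by case: P0 => i Pi; exists (mean_U i + rad i), i |].
  by move=> _ _ [i Pi <-] [j Pj <-]; exact: intervals_meet.
exists x; apply: upper_moment_le => i Pi; apply: cross_at_le_sup => //.
by rewrite lo ?hi //; exists i.
Qed.

End sqdiff_below_sup.

Lemma cross_maxmin : exists am bm,
  maxmin_solution [set m2 | b_lo <= m2 <= b_hi] [set m1 | a_lo <= m1 <= a_hi]
    (fun m2 m1 => cross m1 m2) am bm /\ cross (am bm) bm = S.
Proof.
have K0 := K_ge0.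
have [am [bm sol]] : exists am bm, maxmin_solution [set m2 | b_lo <= m2 <= b_hi]
    [set m1 | a_lo <= m1 <= a_hi] (fun m2 m1 => cross m1 m2) am bm.
  apply: (maxmin_solution_interval (kA := fun m2 => `|m2| + K) (k := K + K)).
  - lra.
  - by move=> m2; have := normr_ge0 m2; lra.
  - exact: b_lo_le_hi.
  - exact: a_lo_le_hi.
  - by move=> m2; apply: lipschitzT_sub; exact: cross_lipschitz_l.
  - move=> m1 m1A; apply: lipschitzT_sub; apply: cross_lipschitz_r.
    exact: norm_le_K_of_a_interval.
exists am, bm; split => //; case: sol => _ amin _ bmax.
apply/le_anti/andP; split.
  by have [m1 m1A le] := exists_cross_le_sup bm; exact: le_trans (amin _ _ m1A) le.
apply: mix_cov_sup_le => i j l Pi Pj l01.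
pose bl := mix l (b i) (b j).
have blB : b_lo <= bl <= b_hi by apply: mix_in => //; exact: b_in.
apply: le_trans (bmax _ blB).
have := mix_cov_le_cross (am bl) bl Pi Pj l01.
by rewrite subrr mulr0 addr0.
Qed.

Let mean_UV_in i : P i -> - K <= mean_U i <= K /\ - K <= mean_V i <= K.
Proof.
move=> /[dup] /Ka + /Kb; rewrite /mean_U /mean_V !ler_norml => /andP[? ?] /andP[? ?].
by split; apply/andP; split; lra.
Qed.

Lemma sqdiff_lipschitz_r beta :
  (4 * K).-lipschitz_[set x | - K <= x <= K] (sqdiff beta).
Proof.
move=> [x y] [/= /andP[? ?] /andP[? ?]]; apply: upper_moment_dist => i Pi.
rewrite (_ : _ - _ = (x - y) * (x + y - (a i + b i))); last by rewrite /moment; ring.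
rewrite normrM mulrC ler_wpM2r //.
move: (Ka Pi) (Kb Pi); rewrite !ler_norml => /andP[? ?] /andP[? ?].
by apply/andP; split; lra.
Qed.

Lemma sqdiff_lipschitz_l alpha :
  (4 * K).-lipschitz_[set x | - K <= x <= K] (sqdiff^~ alpha).
Proof.
move=> [x y] [/= /andP[? ?] /andP[? ?]]; apply: upper_moment_dist => i Pi.
rewrite (_ : _ - _ = (x - y) * (a i - b i - (x + y))); last by rewrite /moment; ring.
rewrite normrM mulrC ler_wpM2r //.
move: (Ka Pi) (Kb Pi); rewrite !ler_norml => /andP[? ?] /andP[? ?].
by apply/andP; split; lra.
Qed.

Lemma sqdiff_clamp_r beta alpha : sqdiff beta (clamp (- K) K alpha) <= sqdiff beta alpha.
Proof.
apply: le_upper_moment => i Pi.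
change (cross_at i (clamp (- K) K alpha + beta) (clamp (- K) K alpha - beta) <=
        cross_at i (alpha + beta) (alpha - beta)).
have [Ui _] := mean_UV_in Pi.
by rewrite !cross_at_sqdiffE; have := clamp_sqr_le alpha Ui; lra.
Qed.

Lemma sqdiff_le_clamp_l beta alpha :
  sqdiff beta alpha <= sqdiff (clamp (- K) K beta) alpha.
Proof.
apply: le_upper_moment => i Pi.
change (cross_at i (alpha + beta) (alpha - beta) <=
        cross_at i (alpha + clamp (- K) K beta) (alpha - clamp (- K) K beta)).
have [_ Vi] := mean_UV_in Pi.
by rewrite !cross_at_sqdiffE; have := clamp_sqr_le beta Vi; lra.
Qed.

Lemma sqdiff_maxmin : exists am bm,
  maxmin_solution setT setT sqdiff am bm /\ sqdiff bm (am bm) = S.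
Proof.
have K0 := K_ge0; have KK : - K <= K by lra.
have [am [bm sol]] : exists am bm, maxmin_solution [set b | - K <= b <= K]
    [set a | - K <= a <= K] sqdiff am bm.
  apply: (maxmin_solution_interval (kA := fun=> 4 * K) (k := 4 * K)) => //.
  - lra.
  - by move=> _; lra.
  - exact: sqdiff_lipschitz_r.
  - by move=> alpha _; exact: sqdiff_lipschitz_l.
have solT := maxmin_solution_setT KK sqdiff_clamp_r sqdiff_le_clamp_l sol.
exists am, bm; split => //; case: solT => _ amin _ bmax.
apply/le_anti/andP; split.
  by have [al le] := exists_sqdiff_le_sup bm; apply: le_trans le; exact: amin.
apply: mix_cov_sup_le => i j l Pi Pj l01.
pose al := mix l (a i) (a j); pose bl := mix l (b i) (b j).
pose beta := (al - bl) / 2.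
apply: le_trans (bmax beta _) => //.
have := mix_cov_le_cross (am beta + beta) (am beta - beta) Pi Pj l01.
have -> : (am beta + beta - al) * (am beta - beta - bl) = (am beta - (al + bl) / 2) ^+ 2.
  by rewrite /beta; field.
by have := sqr_ge0 (am beta - (al + bl) / 2); rewrite /sqdiff; lra.
Qed.

Lemma cross_diag_min : (forall i, P i -> b i = a i) ->
  (forall mu, S <= cross mu mu) /\ exists2 mu, a_lo <= mu <= a_hi & cross mu mu = S.
Proof.
move=> ba.
have lb mu : S <= cross mu mu.
  apply: mix_cov_sup_le => i j l Pi Pj l01.
  have := mix_cov_le_cross mu mu Pi Pj l01.
  rewrite (ba i Pi) (ba j Pj); have := sqr_ge0 (mu - mix l (a i) (a j)).
  by rewrite expr2; lra.
split => //.
have [al le] := exists_sqdiff_le_sup 0; rewrite /sqdiff addr0 subr0 in le.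
exists (clamp a_lo a_hi al); first exact: clamp_in a_lo_le_hi.
apply/le_anti/andP; split; last exact: lb.
apply: le_trans le; apply: le_upper_moment => i Pi.
change (cross_at i (clamp a_lo a_hi al) (clamp a_lo a_hi al) <= cross_at i al al).
rewrite !cross_atE (ba i Pi) -!expr2 lerD2l; exact: clamp_sqr_le (a_in Pi).
Qed.

Let cross_antidiag_lipschitz :
  (4 * K).-lipschitz_[set x | a_lo <= x <= a_hi] (fun mu => cross mu (- mu)).
Proof.
move=> [x y] [/= /norm_le_K_of_a_interval xK /norm_le_K_of_a_interval yK].
apply: upper_moment_dist => i Pi.
rewrite (_ : _ - _ = (x - y) * (a i - b i - (x + y))); last by rewrite /moment; ring.
rewrite normrM mulrC ler_wpM2r //.
move: (Ka Pi) (Kb Pi) xK yK; rewrite !ler_norml.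
by move=> /andP[? ?] /andP[? ?] /andP[? ?] /andP[? ?]; apply/andP; split; lra.
Qed.

Lemma cross_antidiag_max : (forall i, P i -> b i = - a i) ->
  (forall mu, cross mu (- mu) <= S) /\
  exists2 mu, a_lo <= mu <= a_hi & cross mu (- mu) = S.
Proof.
move=> ba.
have ub mu : cross mu (- mu) <= S.
  have [al le] := exists_sqdiff_le_sup mu; apply: le_trans le.
  apply: le_upper_moment => i Pi.
  change (cross_at i mu (- mu) <= cross_at i (al + mu) (al - mu)).
  by rewrite !cross_atE (ba i Pi); have := sqr_ge0 al; rewrite expr2; lra.
split => //.
have K4 : 0 <= 4 * K by have := K_ge0; lra.
have [mu muA mumax] := EVT_max_lipschitz K4 a_lo_le_hi cross_antidiag_lipschitz.
exists mu => //; apply/le_anti/andP; split; first exact: ub.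
apply: mix_cov_sup_le => i j l Pi Pj l01.
pose al := mix l (a i) (a j).
have alA : a_lo <= al <= a_hi by apply: mix_in => //; exact: a_in.
apply: le_trans (mumax _ alA).
have := mix_cov_le_cross al (- al) Pi Pj l01.
by rewrite subrr mul0r addr0.
Qed.

End two_point_mixtures.

(** * Sublinear expectations of bilinear functions of (X, Y) *)

Lemma Lfun2_of_integrable_sqr d (T : measurableType d) (R : realType)
    (mu : {measure set T -> \bar R}) (f : T -> R) : measurable_fun setT f ->
  mu.-integrable setT (EFin \o (fun x => f x ^+ 2)) -> f \in Lfun mu 2%:E.
Proof.
move=> mf /integrableP[_ fint].
rewrite inE; apply/andP; split; rewrite inE //=.
rewrite /finite_norm unlock /Lnorm poweR_lty //.
apply: le_lt_trans fint; apply: ge0_le_integral => //.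
- by move=> x _; rewrite lee_fin powR_ge0.
- apply/measurable_EFinP.
  apply/(@measurableT_comp _ _ _ _ _ _ (fun x : R => x `^ 2)) => //.
  exact/measurableT_comp.
- by apply: measurableT_comp => //; apply/measurable_EFinP; exact: measurable_funX.
- by move=> t _ /=; rewrite normrX powR_mulrn // gee0_abs // lee_fin sqr_ge0.
Qed.

Lemma Lfun1_of_Lfun2 d (T : measurableType d) (R : realType) (P : probability T R) :
  {subset Lfun P 2%:E <= Lfun P 1}.
Proof. exact: Lfun_subset12 (fin_num_measure P _ measurableT). Qed.

Section expectation_bilinear.
Context d (T : measurableType d) (R : realType) (P : probability T R) (X Y : T -> R).
Hypotheses (X2 : X \in Lfun P 2%:E) (Y2 : Y \in Lfun P 2%:E).

Let X1 : X \in Lfun P 1 := Lfun1_of_Lfun2 X2.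
Let Y1 : Y \in Lfun P 1 := Lfun1_of_Lfun2 Y2.
Let XY1 : X \* Y \in Lfun P 1 := Lfun2_mul_Lfun1 X2 Y2.

Let fine_expectationD (f g : T -> R) : f \in Lfun P 1 -> g \in Lfun P 1 ->
  fine ('E_P[f \+ g])%E = fine ('E_P[f])%E + fine ('E_P[g])%E.
Proof. by move=> f1 g1; rewrite expectationD // fineD // expectation_fin_num. Qed.

Let fine_expectationB (f g : T -> R) : f \in Lfun P 1 -> g \in Lfun P 1 ->
  fine ('E_P[f \- g])%E = fine ('E_P[f])%E - fine ('E_P[g])%E.
Proof. by move=> f1 g1; rewrite expectationB // fineB // expectation_fin_num. Qed.

Let fine_expectationZ (k : R) (f : T -> R) : f \in Lfun P 1 ->
  fine ('E_P[k \o* f])%E = k * fine ('E_P[f])%E.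
Proof. by move=> f1; rewrite expectationZl // fineM // expectation_fin_num. Qed.

Lemma expectation_bilinear c0 c1 c2 c3 :
  ('E_P[fun x => (c0 + c1 * X x + c2 * Y x + c3 * (X x * Y x))%R])%E =
  (c0 + c1 * fine ('E_P[X])%E + c2 * fine ('E_P[Y])%E + c3 * fine ('E_P[X \* Y])%E)%:E.
Proof.
have -> : (fun x => c0 + c1 * X x + c2 * Y x + c3 * (X x * Y x)) =
          cst c0 \+ c1 \o* X \+ c2 \o* Y \+ c3 \o* (X \* Y).
  by apply/funext => x /=; ring.
have sc k f : f \in Lfun P 1 -> k \o* f \in Lfun P 1 by exact: Lfun_scale.
rewrite -[LHS]fineK; last first.
  by apply: expectation_fin_num; rewrite !rpredD ?Lfun_cst ?sc.
by rewrite !fine_expectationD ?rpredD ?Lfun_cst ?sc // !fine_expectationZ //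
  expectation_cst.
Qed.

Lemma fine_expectation_bound (h : T -> R) : h \in Lfun P 1 ->
  (forall x, `|h x| <= X x ^+ 2 + Y x ^+ 2 + 1) ->
  `|fine ('E_P[h])%E| <=
    fine ('E_P[fun x => (X x ^+ 2)%R])%E + fine ('E_P[fun x => (Y x ^+ 2)%R])%E + 1.
Proof.
move=> h1 hg.
pose g := (fun x => X x ^+ 2) \+ (fun x => Y x ^+ 2) \+ cst 1.
have g1 : g \in Lfun P 1 by rewrite !rpredD ?Lfun_cst //; exact: Lfun2_mul_Lfun1.
have gE : fine ('E_P[g])%E =
    fine ('E_P[fun x => (X x ^+ 2)%R])%E + fine ('E_P[fun x => (Y x ^+ 2)%R])%E + 1.
  by rewrite !fine_expectationD ?rpredD ?Lfun_cst // ?expectation_cst //;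
    exact: Lfun2_mul_Lfun1.
have mean_ge0 f : (forall x, 0 <= f x) -> 0 <= fine ('E_P[f])%E.
  by move=> f0; apply/fine_ge0/expectation_ge0.
have gh : 0 <= fine ('E_P[g \+ h])%E.
  by apply: mean_ge0 => x; have := hg x; rewrite /g /= ler_norml; lra.
have gNh : 0 <= fine ('E_P[g \- h])%E.
  by apply: mean_ge0 => x; have := hg x; rewrite /g /= ler_norml; lra.
rewrite fine_expectationD // in gh; rewrite fine_expectationB // in gNh.
by rewrite -gE ler_norml; apply/andP; split; lra.
Qed.

End expectation_bilinear.

Section maxmin_bridge.
Variable R : realType.

Lemma is_maxmin_solution (B A : set R) (F : R -> R -> R) am bm :
  maxmin_solution B A F am bm ->
  is_maxmin B A (fun b a => (F b a)%:E) (F bm (am bm))%:E.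
Proof.
move=> [Aam amin Bbm bmax]; exists (fun b => (F b (am b))%:E); split.
- by move=> b _; split => [|_ [a Aa <-]]; [exists (am b) | rewrite lee_fin; exact: amin].
- by split => [|_ [b Bb <-]]; [exists bm | rewrite lee_fin; exact: bmax].
Qed.

Lemma is_minmax_solution (B A : set R) (F : R -> R -> R) am bm :
  maxmin_solution B A F am bm ->
  is_minmax B A (fun b a => - (F b a)%:E)%E (- (F bm (am bm))%:E)%E.
Proof.
move=> [Aam amin Bbm bmax]; exists (fun b => - (F b (am b))%:E)%E; split.
- by move=> b _; split => [|_ [a Aa <-]]; [exists (am b) | rewrite leeN2 lee_fin; exact: amin].
- by split => [|_ [b Bb <-]]; [exists bm | rewrite leeN2 lee_fin; exact: bmax].
Qed.

Lemma is_min_image (A : set R) (f : R -> R) x : A x ->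
  (forall y, A y -> f x <= f y) -> is_min [set (f y)%:E | y in A] (f x)%:E.
Proof. by move=> Ax fx; split => [|_ [y Ay <-]]; [exists x | rewrite lee_fin; exact: fx]. Qed.

End maxmin_bridge.

Lemma expectation_le_sublin_exp d (T : measurableType d) (R : realType)
    (Ps : set (probability T R)) (P : probability T R) (Z : T -> R) :
  Ps P -> ('E_P[Z] <= sublin_exp Ps Z)%E.
Proof. by move=> PP; apply: ereal_sup_ubound; exists P => //; rewrite unlock. Qed.

Lemma Lfun2_of_sublin_exp_sqr d (T : measurableType d) (R : realType)
    (Ps : set (probability T R)) (P : probability T R) (Z : T -> R) :
  Ps P -> measurable_fun setT Z -> (sublin_exp Ps (fun x => (Z x ^+ 2)%R) < +oo)%E ->
  Z \in Lfun P 2%:E.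
Proof.
move=> PP mZ Zfin; apply: Lfun2_of_integrable_sqr => //; apply/integrableP; split.
  by apply/measurable_EFinP; exact: measurable_funX.
rewrite (eq_integral (fun x => (Z x ^+ 2)%:E)); last first.
  by move=> x _; rewrite /= ?abse_EFin ger0_norm // sqr_ge0.
by apply: le_lt_trans Zfin; have := expectation_le_sublin_exp (fun x => Z x ^+ 2) PP;
  rewrite unlock.
Qed.

Section sublinear_expectation.
Context d (T : measurableType d) (R : realType) (Ps : set (probability T R)).
Variables (X Y : T -> R).
Hypotheses (Ps0 : Ps !=set0) (mX : measurable_fun setT X) (mY : measurable_fun setT Y).
Hypotheses (finX : (sublin_exp Ps (fun x => (X x ^+ 2)%R) < +oo)%E)
  (finY : (sublin_exp Ps (fun x => (Y x ^+ 2)%R) < +oo)%E).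

Let a P := fine ('E_P[X])%E.
Let b P := fine ('E_P[Y])%E.
Let e P := fine ('E_P[X \* Y])%E.
Let K := fine (sublin_exp Ps (fun x => X x ^+ 2)) + fine (sublin_exp Ps (fun x => Y x ^+ 2)) + 1.

Let X2 P : Ps P -> X \in Lfun P 2%:E.
Proof. by move=> PP; exact: Lfun2_of_sublin_exp_sqr PP mX finX. Qed.
Let Y2 P : Ps P -> Y \in Lfun P 2%:E.
Proof. by move=> PP; exact: Lfun2_of_sublin_exp_sqr PP mY finY. Qed.

Let fine_expectation_le_sublin_exp P (Z : T -> R) : Ps P -> Z \in Lfun P 2%:E ->
  (sublin_exp Ps (fun x => (Z x ^+ 2)%R) < +oo)%E ->
  fine ('E_P[fun x => (Z x ^+ 2)%R])%E <= fine (sublin_exp Ps (fun x => Z x ^+ 2)).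
Proof.
move=> PP Z2 Zfin; have Z0 : (0 <= 'E_P[fun x => (Z x ^+ 2)%R])%E.
  by apply: expectation_ge0 => x; exact: sqr_ge0.
apply: fine_le; last exact: expectation_le_sublin_exp.
- by apply: expectation_fin_num; exact: Lfun2_mul_Lfun1.
- by rewrite ge0_fin_numE // (le_trans Z0) // expectation_le_sublin_exp.
Qed.

Let moment_bound P (h : T -> R) : Ps P -> h \in Lfun P 1 ->
  (forall x, `|h x| <= X x ^+ 2 + Y x ^+ 2 + 1) -> `|fine ('E_P[h])%E| <= K.
Proof.
move=> PP h1 hg; apply: le_trans (fine_expectation_bound (X2 PP) (Y2 PP) h1 hg) _.
rewrite /K lerD2r; apply: lerD.
- exact: fine_expectation_le_sublin_exp PP (X2 PP) finX.
- exact: fine_expectation_le_sublin_exp PP (Y2 PP) finY.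
Qed.

Let sqr_bound (u v : R) : `|u| <= u ^+ 2 + v ^+ 2 + 1 /\ `|u * v| <= u ^+ 2 + v ^+ 2 + 1.
Proof.
have := normr_ge0 u; have := normr_ge0 v; rewrite normrM.
have := real_normK (num_real u); have := real_normK (num_real v).
by split; nra.
Qed.

Let Ka P : Ps P -> `|a P| <= K.
Proof.
move=> PP; apply: moment_bound (Lfun1_of_Lfun2 (X2 PP)) _ => // x.
by case: (sqr_bound (X x) (Y x)).
Qed.
Let Kb P : Ps P -> `|b P| <= K.
Proof.
move=> PP; apply: moment_bound (Lfun1_of_Lfun2 (Y2 PP)) _ => // x.
by rewrite (addrC (X x ^+ 2)); case: (sqr_bound (Y x) (X x)).
Qed.
Let Ke P : Ps P -> `|e P| <= K.
Proof.
move=> PP; apply: moment_bound (Lfun2_mul_Lfun1 (X2 PP) (Y2 PP)) _ => // x.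
by case: (sqr_bound (X x) (Y x)).
Qed.

Lemma sublin_exp_bilinear c0 c1 c2 c3 (Z : T -> R) :
  (forall x, Z x = c0 + c1 * X x + c2 * Y x + c3 * (X x * Y x)) ->
  sublin_exp Ps Z = (upper_moment Ps a b e c0 c1 c2 c3)%:E.
Proof.
move=> ZE; have -> : Z = _ := funext ZE.
rewrite /sublin_exp (_ : [set _ | P in Ps] =
    EFin @` [set moment a b e P c0 c1 c2 c3 | P in Ps]); last first.
  rewrite image_comp; apply: eq_imagel => P PP /=.
  by rewrite -(expectation_bilinear (X2 PP) (Y2 PP)) unlock.
rewrite ereal_sup_EFin //; last by case: Ps0 => P PP; exists (moment a b e P c0 c1 c2 c3), P.
exists (`|c0| + (`|c1| + `|c2| + `|c3|) * K) => _ [P PP <-].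
exact: moment_le Ka Kb Ke _ _ _ _ _ PP.
Qed.

Local Notation a_lo := (a_lo Ps a b e).
Local Notation a_hi := (a_hi Ps a b e).
Local Notation b_lo := (b_lo Ps a b e).
Local Notation b_hi := (b_hi Ps a b e).
Local Notation cross := (cross Ps a b e).
Local Notation sqdiff := (sqdiff Ps a b e).
Local Notation S := (mix_cov_sup Ps a b e).

Lemma sublin_exp_cross m1 m2 :
  sublin_exp Ps (fun x => (X x - m1) * (Y x - m2)) = (cross m1 m2)%:E.
Proof. by apply: sublin_exp_bilinear => x; ring. Qed.

Lemma sublin_exp_sqdiff beta alpha :
  sublin_exp Ps (fun x => ((X x + Y x) / 2 - alpha) ^+ 2 - ((X x - Y x) / 2 - beta) ^+ 2) =
  (sqdiff beta alpha)%:E.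
Proof. by apply: sublin_exp_bilinear => x; field. Qed.

Lemma meanset_X : meanset Ps X = [set m | a_lo <= m <= a_hi].
Proof.
rewrite /meanset (@sublin_exp_bilinear 0 1 0 0 X); last by move=> x; ring.
rewrite (@sublin_exp_bilinear 0 (-1) 0 0); last by move=> x; ring.
by apply/seteqP; split => m /=; rewrite !lee_fin; [move=> [? ?]; apply/andP | move/andP].
Qed.

Lemma meanset_Y : meanset Ps Y = [set m | b_lo <= m <= b_hi].
Proof.
rewrite /meanset (@sublin_exp_bilinear 0 0 1 0 Y); last by move=> x; ring.
rewrite (@sublin_exp_bilinear 0 0 (-1) 0); last by move=> x; ring.
by apply/seteqP; split => m /=; rewrite !lee_fin; [move=> [? ?]; apply/andP | move/andP].
Qed.

Lemma meanset_opp_Y (Y' : T -> R) : (forall x, Y x = - Y' x) ->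
  meanset Ps Y' = [set m | b_lo <= - m <= b_hi].
Proof.
move=> YY'; rewrite /meanset (@sublin_exp_bilinear 0 0 (-1) 0 Y'); last first.
  by move=> x; rewrite YY'; ring.
rewrite (@sublin_exp_bilinear 0 0 1 0); last by move=> x; rewrite YY'; ring.
apply/seteqP; split => m /=; rewrite !lee_fin /b_lo /b_hi.
  by move=> [? ?]; apply/andP; split; lra.
by move=> /andP[? ?]; split; lra.
Qed.

Lemma upper_covariance_maxmin : is_maxmin (meanset Ps Y) (meanset Ps X)
  (fun mu2 mu1 => sublin_exp Ps (fun x => (X x - mu1) * (Y x - mu2))) S%:E.
Proof.
have [am [bm [sol <-]]] := cross_maxmin Ps0 Ka Kb Ke.
rewrite meanset_X meanset_Y (_ : (fun mu2 mu1 => _) = fun mu2 mu1 => (cross mu1 mu2)%:E).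
  exact: is_maxmin_solution sol.
by apply/funext => m2; apply/funext => m1; exact: sublin_exp_cross.
Qed.

Lemma upper_covariance_sqdiff : is_maxmin setT setT (fun beta alpha => sublin_exp Ps
  (fun x => ((X x + Y x) / 2 - alpha) ^+ 2 - ((X x - Y x) / 2 - beta) ^+ 2)) S%:E.
Proof.
have [am [bm [sol <-]]] := sqdiff_maxmin Ps0 Ka Kb Ke.
rewrite (_ : (fun beta alpha => _) = fun beta alpha => (sqdiff beta alpha)%:E).
  exact: is_maxmin_solution sol.
by apply/funext => beta; apply/funext => alpha; exact: sublin_exp_sqdiff.
Qed.

(* The section variable [Y] plays the role of [- Y']. *)
Lemma lower_covariance_minmax (Y' : T -> R) : (forall x, Y x = - Y' x) ->
  is_minmax (meanset Ps Y') (meanset Ps X)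
    (fun mu2 mu1 => - sublin_exp Ps (fun x => (- ((X x - mu1) * (Y' x - mu2)))%R))%E (- S)%:E.
Proof.
move=> YY'; have [am [bm [sol val]]] := cross_maxmin Ps0 Ka Kb Ke.
have := is_minmax_solution (maxmin_solution_oppB sol); rewrite /= opprK val EFinN.
rewrite meanset_X meanset_opp_Y //; congr is_minmax.
apply/funext => m2; apply/funext => m1; rewrite EFinN -sublin_exp_cross.
by congr (- sublin_exp Ps _)%E; apply/funext => x; rewrite YY'; ring.
Qed.

Lemma lower_covariance_sqdiff (Y' : T -> R) : (forall x, Y x = - Y' x) ->
  is_minmax setT setT (fun alpha beta => - sublin_exp Ps
    (fun x => (- ((X x + Y' x) / 2 - alpha) ^+ 2 + ((X x - Y' x) / 2 - beta) ^+ 2)%R))%E (- S)%:E.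
Proof.
move=> YY'; have [am [bm [sol <-]]] := sqdiff_maxmin Ps0 Ka Kb Ke.
rewrite EFinN (_ : (fun alpha beta => _) = fun alpha beta => - (sqdiff alpha beta)%:E)%E.
  exact: is_minmax_solution sol.
apply/funext => alpha; apply/funext => beta; rewrite -sublin_exp_sqdiff.
by congr (- sublin_exp Ps _)%E; apply/funext => x; rewrite YY'; field.
Qed.

Lemma upper_variance_min : (forall x, Y x = X x) ->
  is_min [set sublin_exp Ps (fun x => (X x - mu) ^+ 2) | mu in meanset Ps X] S%:E.
Proof.
move=> YX; have YXE : Y = X := funext YX.
have ba P : Ps P -> b P = a P by rewrite /a /b YXE.
have [lb [mu muA muS]] := cross_diag_min Ps0 Ka Kb Ke ba.
rewrite meanset_X (eq_imagel (f' := fun mu => (cross mu mu)%:E)); last first.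
  by move=> m _; rewrite -sublin_exp_cross YXE.
by rewrite -muS; apply: is_min_image => // m _; rewrite muS; exact: lb.
Qed.

Lemma lower_variance_min : (forall x, Y x = - X x) ->
  is_min [set (- sublin_exp Ps (fun x => (- (X x - mu) ^+ 2)%R))%E | mu in meanset Ps X] (- S)%:E.
Proof.
move=> YX.
have ba P : Ps P -> b P = - a P.
  move=> PP; rewrite /a /b (_ : Y = (-1) \o* X); last by apply/funext => x; rewrite YX /= mulrN1.
  rewrite expectationZl ?fineM ?mulN1r //; last exact: Lfun1_of_Lfun2 (X2 PP).
  by apply: expectation_fin_num; exact: Lfun1_of_Lfun2 (X2 PP).
have [ub [mu muA muS]] := cross_antidiag_max Ps0 Ka Kb Ke ba.
rewrite meanset_X (eq_imagel (f' := fun mu => (- cross mu (- mu))%:E)); last first.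
  move=> m _; rewrite EFinN -sublin_exp_cross; congr (- sublin_exp Ps _)%E.
  by apply/funext => x; rewrite YX; ring.
by rewrite -muS; apply: is_min_image => // m _; rewrite lerN2 muS; exact: ub.
Qed.

End sublinear_expectation.

Lemma sublin_exp_ge0 d (T : measurableType d) (R : realType)
    (Ps : set (probability T R)) (Z : T -> R) :
  Ps !=set0 -> (forall x, 0 <= Z x) -> (0 <= sublin_exp Ps Z)%E.
Proof.
move=> [P PP] Z0; apply: le_trans (expectation_le_sublin_exp Z PP).
exact: expectation_ge0.
Qed.

Unset Implicit Arguments.
Local Open Scope ereal_scope.

Theorem proposition3p12 (d : measure_display) (T : measurableType d)
  (R : realType) (Ps : set (probability T R)) (X Y : T -> R) :
  Ps !=set0 ->
  measurable_fun setT X -> measurable_fun setT Y ->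
  sublin_exp Ps (fun x => (X x ^+ 2)%R) + sublin_exp Ps (fun x => (Y x ^+ 2)%R) < +oo ->
  let U := (fun x => (X x + Y x) / 2)%R in
  let V := (fun x => (X x - Y x) / 2)%R in
  (* upper covariance *)
  (exists c : \bar R,
     is_maxmin (meanset Ps Y) (meanset Ps X)
       (fun mu2 mu1 => sublin_exp Ps (fun x => ((X x - mu1) * (Y x - mu2))%R)) c /\
     is_maxmin [set: R] [set: R]
       (fun beta alpha => sublin_exp Ps
          (fun x => ((U x - alpha) ^+ 2 - (V x - beta) ^+ 2)%R)) c) /\
  (* lower covariance *)
  (exists c : \bar R,
     is_minmax (meanset Ps Y) (meanset Ps X)
       (fun mu2 mu1 => - sublin_exp Ps (fun x => (- ((X x - mu1) * (Y x - mu2)))%R)) c /\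
     is_minmax [set: R] [set: R]
       (fun alpha beta => - sublin_exp Ps
          (fun x => (- (U x - alpha) ^+ 2 + (V x - beta) ^+ 2)%R)) c) /\
  (* C_bar(X,X) = V_bar(X) *)
  (exists c : \bar R,
     is_maxmin (meanset Ps X) (meanset Ps X)
       (fun mu2 mu1 => sublin_exp Ps (fun x => ((X x - mu1) * (X x - mu2))%R)) c /\
     is_min [set sublin_exp Ps (fun x => ((X x - mu) ^+ 2)%R) | mu in meanset Ps X] c) /\
  (* C_under(X,X) = V_under(X) *)
  (exists c : \bar R,
     is_minmax (meanset Ps X) (meanset Ps X)
       (fun mu2 mu1 => - sublin_exp Ps (fun x => (- ((X x - mu1) * (X x - mu2)))%R)) c /\
     is_min [set - sublin_exp Ps (fun x => (- (X x - mu) ^+ 2)%R) | mu in meanset Ps X] c).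
Proof.
move=> Ps0 mX mY fin U V.
have sqr_sublin_ge0 Z : 0 <= sublin_exp Ps (fun x => (Z x ^+ 2)%R).
  by apply: sublin_exp_ge0 => // x; exact: sqr_ge0.
have finX := le_lt_trans (leeDl _ (sqr_sublin_ge0 Y)) fin.
have finY := le_lt_trans (leeDr _ (sqr_sublin_ge0 X)) fin.
have finN Z : sublin_exp Ps (fun x => (Z x ^+ 2)%R) < +oo ->
    sublin_exp Ps (fun x => ((- Z x) ^+ 2)%R) < +oo.
  by move=> Zfin; under eq_fun do rewrite sqrrN.
have mNX := measurable_funN mX; have mNY := measurable_funN mY.
split; [|split; [|split]]; eexists; split.
- apply: (upper_covariance_maxmin Ps0 mX mY finX finY).
- apply: (upper_covariance_sqdiff Ps0 mX mY finX finY).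
- apply: (lower_covariance_minmax Ps0 mX mNY finX (finN _ finY) (Y' := Y)) => //.
- apply: (lower_covariance_sqdiff Ps0 mX mNY finX (finN _ finY) (Y' := Y)) => //.
- apply: (upper_covariance_maxmin Ps0 mX mX finX finX).
- apply: (upper_variance_min Ps0 mX mX finX finX) => //.
- apply: (lower_covariance_minmax Ps0 mX mNX finX (finN _ finX) (Y' := X)) => //.
- apply: (lower_variance_min Ps0 mX mNX finX (finN _ finX)) => //.
Qed.
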